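(* Let $\{P_t\}_{t\geq 0}$ be a Markov--Feller semigroup on a Polish space $\mathcal{X}$. If $\{P_t\}_{t\geq 0}$ is asymptotically stable, then it is eventually continuous at every point of $\mathcal{X}$. Similarly, if $\{P_t\}_{t\geq 0}$ is weakly-* mean ergodic, then it is Ces\`aro eventually continuous at every point of $\mathcal{X}$.
   Context: $(\mathcal{X},\rho)$ is a Polish space, $\mathcal{P}(\mathcal{X})$ the Borel probability measures. A Markov--Feller semigroup $\{P_t\}_{t\ge0}$ is a semigroup of mass-preserving positively linear operators on finite Borel measures, each with a dual linear operator on bounded Borel functions ($\langle f,P_t\mu\rangle=\langle P_tf,\mu\rangle$) preserving bounded continuous functions. For $t>0$: $Q_tf=\frac1t\int_0^tP_sf\,ds$, $Q_t\mu=\frac1t\int_0^tP_s\mu\,ds$. Asymptotically stable: unique invariant probability $\mu_*$ with $P_t\mu\to\mu_*$ weakly for all $\mu\in\mathcal{P}(\mathcal{X})$. Weakly-* mean ergodic: unique invariant probability $\mu_*$ with $Q_t\mu\to\mu_*$ weakly for all $\mu\in\mathcal{P}(\mathcal{X})$. Eventually continuous at $z$: for every bounded Lipschitz $f$, $\limsup_{x\to z}\limsup_{t\to\infty}|P_tf(x)-P_tf(z)|=0$; Ces\`aro eventually continuous: the same with $Q_t$ in place of $P_t$. *)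

From HB Require Import structures.
From mathcomp Require Import all_boot all_order all_algebra.
From mathcomp Require Import all_classical all_reals all_analysis.
Import Order.TTheory GRing.Theory Num.Theory.
Import numFieldNormedType.Exports.
Set Implicit Arguments.
Unset Strict Implicit.
Unset Printing Implicit Defensive.
Local Open Scope classical_set_scope.
Local Open Scope ring_scope.

(* metric spaces with a distinguished point (needed by the library's
   generated-sigma-algebra construction; harmless: for an empty space the
   theorem is vacuous) *)
#[short(type="pmetricType")]
HB.structure Definition PointedMetric (K : numDomainType) :=
  { M of Metric K M & Pointed M }.

Definition polish_space (R : realType) (X : pmetricType R) : Prop :=
  (forall u : nat -> X,
     (forall e : R, 0 < e -> exists N : nat, forall m n : nat,
        (N <= m)%N -> (N <= n)%N -> mdist (u m) (u n) < e) ->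
     exists l : X, u n @[n --> \oo] --> l) /\
  (exists D : set X, countable D /\ dense D).

Notation borel X := (g_sigma_algebraType (@open X)).

Notation fmeas R X := {finite_measure set (borel X) -> \bar R}.

Section Defs.
Context {R : realType} {X : pmetricType R}.

Definition bounded_fun (f : X -> R) : Prop := exists M : R, forall x, `|f x| <= M.

Definition bborel (f : X -> R) : Prop :=
  bounded_fun f /\ measurable_fun setT (f : borel X -> R).

Definition bcont (f : X -> R) : Prop := bounded_fun f /\ continuous f.

Definition blip (f : X -> R) : Prop :=
  bounded_fun f /\ exists L : R, forall x y, `|f x - f y| <= L * mdist x y.

Definition mpair (f : X -> R) (mu : fmeas R X) : R := Rintegral mu setT f.

Definition is_prob (mu : fmeas R X) : Prop := mu setT = 1%E.

(* {P_t} acting on finite measures (Pm) together with its dual operators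
   on bounded Borel functions (Pf) form a Markov--Feller semigroup. *)
Definition markov_feller (Pm : R -> fmeas R X -> fmeas R X)
  (Pf : R -> (X -> R) -> X -> R) : Prop :=
  [/\
      (forall t mu, 0 <= t -> Pm t mu setT = mu setT),
      (forall t (mu nu lam : fmeas R X), 0 <= t ->
         (forall A, measurable A -> lam A = (mu A + nu A)%E) ->
         forall A, measurable A -> Pm t lam A = (Pm t mu A + Pm t nu A)%E) /\
      (forall t (c : R) (mu lam : fmeas R X), 0 <= t -> 0 <= c ->
         (forall A, measurable A -> lam A = (c%:E * mu A)%E) ->
         forall A, measurable A -> Pm t lam A = (c%:E * Pm t mu A)%E),
      (forall mu A, measurable A -> Pm 0 mu A = mu A) /\
      (forall s t mu A, 0 <= s -> 0 <= t -> measurable A ->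
         Pm (s + t) mu A = Pm s (Pm t mu) A),
      (forall t f, 0 <= t -> bborel f ->
         bborel (Pf t f) /\ forall mu, mpair f (Pm t mu) = mpair (Pf t f) mu) /\
      (forall t f g (a b : R), 0 <= t -> bborel f -> bborel g ->
         Pf t (fun x => a * f x + b * g x) = (fun x => a * Pf t f x + b * Pf t g x))
    &
      (forall t f, 0 <= t -> bcont f -> bcont (Pf t f)) ].

Definition invariant (Pm : R -> fmeas R X -> fmeas R X) (mu : fmeas R X) :=
  forall t, 0 <= t -> forall A, measurable A -> Pm t mu A = mu A.

(* weak convergence, as t -> +oo, of a family of finite measures given by
   its pairings with bounded continuous functions *)
Definition weak_cvg_pair (nuf : R -> (X -> R) -> R) (mu : fmeas R X) :=
  forall f, bcont f -> nuf t f @[t --> +oo] --> mpair f mu.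

Definition cesaro (g : R -> R) (t : R) : R :=
  t^-1 * Rintegral (@lebesgue_measure R) `[0, t] g.

Definition Qf (Pf : R -> (X -> R) -> X -> R) (t : R) (f : X -> R) (x : X) : R :=
  cesaro (fun s => Pf s f x) t.

Definition Qpair (Pm : R -> fmeas R X -> fmeas R X) (mu : fmeas R X)
  (t : R) (f : X -> R) : R :=
  cesaro (fun s => mpair f (Pm s mu)) t.

Definition unique_invariant_prob (Pm : R -> fmeas R X -> fmeas R X)
  (mus : fmeas R X) : Prop :=
  [/\ is_prob mus, invariant Pm mus &
      forall nu, is_prob nu -> invariant Pm nu ->
        forall A, measurable A -> nu A = mus A].

Definition asymptotically_stable (Pm : R -> fmeas R X -> fmeas R X) : Prop :=
  exists mus, unique_invariant_prob Pm mus /\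
    forall mu, is_prob mu -> weak_cvg_pair (fun t f => mpair f (Pm t mu)) mus.

Definition weakly_mean_ergodic (Pm : R -> fmeas R X -> fmeas R X) : Prop :=
  exists mus, unique_invariant_prob Pm mus /\
    forall mu, is_prob mu -> weak_cvg_pair (Qpair Pm mu) mus.

Definition ev_cont_op (T : R -> (X -> R) -> X -> R) (z : X) : Prop :=
  forall f, blip f ->
    limf_esup (fun x : X =>
       limf_esup (fun t : R => (`|T t f x - T t f z|)%:E) (pinfty_nbhs R))
     (nbhs z) = 0%E.

Definition eventually_continuous (Pf : R -> (X -> R) -> X -> R) (z : X) :=
  ev_cont_op Pf z.

Definition cesaro_eventually_continuous (Pf : R -> (X -> R) -> X -> R) (z : X) :=
  ev_cont_op (Qf Pf) z.

End Defs.

From HB Require Import structures.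
From mathcomp Require Import all_boot all_order all_algebra.
From mathcomp Require Import all_classical all_reals all_analysis.
From mathcomp Require Import measurable_realfun.
Import Order.TTheory GRing.Theory Num.Theory.
Import numFieldNormedType.Exports.
Local Open Scope classical_set_scope.
Local Open Scope ring_scope.

(* Pairing with a Dirac mass turns the weak convergence of P_t delta_x (or of
   Q_t delta_x) to mu_* into the pointwise convergence of P_t f x (or Q_t f x)
   to <f, mu_*> for every bounded continuous f.  The limit does not depend on
   x, so |P_t f x - P_t f z| tends to 0 for every x and both limsups vanish. *)

Lemma limf_esup_cvg0 {R : realType} {T : choiceType} {Y : filteredType T}
    (F : set_system Y) {FF : ProperFilter F} (g : Y -> R) :
  g @ F --> 0 -> (forall x, 0 <= g x) -> limf_esup (fun x => (g x)%:E) F = 0%E.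
Proof.
move=> g0 g_ge0; apply/eqP; rewrite eq_le limf_esup_ge0 ?andbT; last 2 first.
- exact: filter_not_empty.
- by move=> x; rewrite lee_fin.
apply/lee_addgt0Pr => e e0; rewrite add0e limf_esupE.
apply: ge_ereal_inf; exists (ereal_sup ((fun x => (g x)%:E) @` [set x | g x < e])).
  exists [set x | g x < e] => //.
  move/cvgrPdist_lt : g0 => /(_ e e0); apply: filterS => x /=.
  by rewrite sub0r normrN ger0_norm.
by apply: ge_ereal_sup => _ [x /= gxe <-]; rewrite lee_fin ltW.
Qed.

Section ContinuityCriteria.
Context {R : realType} {X : pmetricType R}.

Lemma continuous_borel_measurable (f : X -> R) :
  continuous f -> measurable_fun setT (f : borel X -> R).
Proof.
move=> cf; apply: (measurability _ (RGenOpens.measurableE R)).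
move=> _ [_ [a [b ->]] <-]; rewrite setTI; apply: sub_gen_smallest.
by move/continuousP : cf; apply; exact: interval_open.
Qed.

Lemma bcont_bborel (f : X -> R) : bcont f -> bborel f.
Proof. by move=> [bf cf]; split => //; exact: continuous_borel_measurable. Qed.

Lemma blip_bcont (f : X -> R) : blip f -> bcont f.
Proof.
move=> [bf [L fL]]; split => // x; apply/cvgrPdist_lt => e e0.
have L1_gt0 : 0 < `|L| + 1 by rewrite ltr_wpDl.
near=> y.
have : ball x (e / (`|L| + 1)) y by near: y; apply: nbhsx_ballx; rewrite divr_gt0.
rewrite ballEmdist /= => xy_lt.
apply: (le_lt_trans (fL x y)); apply: (@le_lt_trans _ _ ((`|L| + 1) * mdist x y)).
  by rewrite ler_wpM2r ?mdist_ge0// (le_trans (ler_norm L)) ?lerDl.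
by rewrite mulrC -ltr_pdivlMr.
Unshelve. all: by end_near. Qed.

Lemma ev_cont_op_cvg (T : R -> (X -> R) -> X -> R) (z : X) :
  (forall f, blip f -> exists l : R, forall x, T t f x @[t --> +oo] --> l) ->
  ev_cont_op T z.
Proof.
move=> T_cvg f /T_cvg[l Tl].
have limsup_t0 x :
    limf_esup (fun t => (`|T t f x - T t f z|)%:E) (pinfty_nbhs R) = 0%E.
  apply: limf_esup_cvg0 => //.
  by rewrite -(normr0 R) -(subrr l); apply: cvg_norm; exact: cvgB.
rewrite (funext limsup_t0).
by apply: (@limf_esup_cvg0 _ _ _ _ _ (fun=> 0)) => //; exact: cvg_cst.
Qed.

Lemma dirac_prob (x : X) : is_prob (\d_ (x : borel X)).
Proof. by rewrite /is_prob /= diracE mem_set. Qed.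

Lemma mpair_dirac (f : X -> R) (x : X) :
  measurable_fun setT (f : borel X -> R) -> mpair f (\d_ (x : borel X)) = f x.
Proof.
move=> mf; rewrite /mpair /Rintegral integral_dirac//=; last exact/measurable_EFinP.
by rewrite indicE mem_set // mul1r.
Qed.

Variables (Pm : R -> fmeas R X -> fmeas R X) (Pf : R -> (X -> R) -> X -> R).
Hypothesis PmPf : markov_feller Pm Pf.

Lemma mpair_Pm_dirac (f : X -> R) (x : X) (t : R) : 0 <= t -> bborel f ->
  mpair f (Pm t (\d_ (x : borel X))) = Pf t f x.
Proof.
case: PmPf => _ _ _ [dual _] _ t_ge0 /(dual t f t_ge0)[[_ mPf] ->].
exact: mpair_dirac.
Qed.

Lemma Qpair_dirac (f : X -> R) (x : X) (t : R) : bborel f ->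
  Qpair Pm (\d_ (x : borel X)) t f = Qf Pf t f x.
Proof.
move=> bf; rewrite /Qf /Qpair /cesaro; congr (_ * _); apply: eq_Rintegral => s.
by rewrite inE /= in_itv /= => /andP[s_ge0 _]; rewrite mpair_Pm_dirac.
Qed.

Lemma asymptotically_stable_eventually_continuous (z : X) :
  asymptotically_stable Pm -> eventually_continuous Pf z.
Proof.
move=> [mus [_ Pm_cvg]]; apply: ev_cont_op_cvg => f /blip_bcont cf.
exists (mpair f mus) => x; apply: cvg_trans (Pm_cvg _ (dirac_prob x) f cf).
apply: near_eq_cvg; near=> t.
by rewrite mpair_Pm_dirac//; exact: bcont_bborel.
Unshelve. all: by end_near. Qed.

Lemma weakly_mean_ergodic_cesaro_eventually_continuous (z : X) :
  weakly_mean_ergodic Pm -> cesaro_eventually_continuous Pf z.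
Proof.
move=> [mus [_ Qm_cvg]]; apply: ev_cont_op_cvg => f /blip_bcont cf.
exists (mpair f mus) => x; apply: cvg_trans (Qm_cvg _ (dirac_prob x) f cf).
by apply: near_eq_cvg; near=> t; rewrite Qpair_dirac//; exact: bcont_bborel.
Unshelve. all: by end_near. Qed.

End ContinuityCriteria.

Theorem proposition2p11 (R : realType) (X : pmetricType R)
  (Pm : R -> fmeas R X -> fmeas R X) (Pf : R -> (X -> R) -> X -> R) :
  polish_space X -> markov_feller Pm Pf ->
  (asymptotically_stable Pm -> forall z : X, eventually_continuous Pf z) /\
  ((* measurability in time, needed for Q_t to be well defined *)
   (forall f, bcont f -> forall x : X,
      measurable_fun [set s : R | 0 <= s] (fun s => Pf s f x)) ->
   (forall mu f, is_prob mu -> bcont f ->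
      measurable_fun [set s : R | 0 <= s] (fun s => mpair f (Pm s mu))) ->
   weakly_mean_ergodic Pm -> forall z : X, cesaro_eventually_continuous Pf z).
Proof.
move=> _ PmPf; split=> [stable z | _ _ ergodic z].
  exact: asymptotically_stable_eventually_continuous PmPf z stable.
exact: weakly_mean_ergodic_cesaro_eventually_continuous PmPf z ergodic.
Qed.
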